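(* Let $S$ be an inverse semigroup that is a mirror semigroup and is continuous. Then $S$ is separately Scott-continuous.
   Context: An inverse semigroup is a semigroup $S$ in which every $s$ has a unique $s^*$ with $ss^*s=s$ and $s^*ss^*=s^*$. $\Sigma=\Sigma(S)$ is the set of idempotents. The intrinsic order is $s\leqslant t$ iff $s=t\epsilon$ for some idempotent $\epsilon$. A subset is directed if nonempty and any two elements have an upper bound in it. $S$ is a mirror semigroup if every directed subset of $\Sigma$ having a supremum in $(\Sigma,\leqslant)$ also has a supremum in $(S,\leqslant)$. In a poset, $x$ is way-below $y$ ($x\ll y$) if for every directed subset $D$ that has a supremum with $y\leqslant \sup D$, there is $d\in D$ with $x\leqslant d$. A poset is continuous if for every element $s$ the set $\{t : t\ll s\}$ is directed with supremum $s$; $S$ is continuous if $(S,\leqslant)$ is. $S$ is separately Scott-continuous if for every directed $D\subseteq S$ with a supremum $\bigvee D$ in $S$ and every $s\in S$, $\bigvee(Ds)$ exists in $S$ and equals $(\bigvee D)s$. *)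

Section InvSemigroup.
Context {T : Type}.
Variable mul : T -> T -> T.

Definition is_inverse_semigroup : Prop :=
  (forall a b c, mul a (mul b c) = mul (mul a b) c) /\
  (forall s, exists! t, mul (mul s t) s = s /\ mul (mul t s) t = t).

Definition idem (e : T) : Prop := mul e e = e.

Definition ileq (s t : T) : Prop := exists e, idem e /\ s = mul t e.

(* generic order-theoretic notions relative to a carrier predicate P
   (the sub-poset {x | P x} with the order ileq restricted to it) *)
Definition upper_bound_in (P D : T -> Prop) (u : T) : Prop :=
  P u /\ forall d, D d -> ileq d u.

Definition is_sup_in (P D : T -> Prop) (u : T) : Prop :=
  upper_bound_in P D u /\ forall v, upper_bound_in P D v -> ileq u v.

Definition directed (D : T -> Prop) : Prop :=
  (exists d, D d) /\
  forall a b, D a -> D b -> exists c, D c /\ ileq a c /\ ileq b c.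

Definition allS : T -> Prop := fun _ => True.

Definition is_sup (D : T -> Prop) (u : T) : Prop := is_sup_in allS D u.

Definition mirror : Prop :=
  forall D : T -> Prop, (forall d, D d -> idem d) -> directed D ->
    (exists u, is_sup_in idem D u) -> exists u, is_sup D u.

Definition way_below (x y : T) : Prop :=
  forall D : T -> Prop, directed D -> forall u, is_sup D u -> ileq y u ->
    exists d, D d /\ ileq x d.

Definition continuous_S : Prop :=
  forall s, directed (fun t => way_below t s) /\ is_sup (fun t => way_below t s) s.

Definition sep_scott_continuous : Prop :=
  forall D : T -> Prop, directed D -> forall u, is_sup D u ->
    forall s, is_sup (fun x => exists d, D d /\ x = mul d s) (mul u s).

End InvSemigroup.

(* In an inverse semigroup the idempotents commute, so the intrinsic order is
   compatible with right multiplication and [w <= u f] with [f] idempotent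
   forces [w f = w].  Let [D] be directed with supremum [u], let [v] bound
   [D s] from above, and put [f = s s*].  By continuity it suffices to bound
   every [w << u f] by [v s*]: since [u f <= u], such a [w] lies below some
   [d] in [D], whence [w = w f <= d f = d s s* <= v s*].  Thus
   [u s = u f s <= v s* s <= v]. *)

From Stdlib Require Import ClassicalEpsilon.

Section InverseSemigroup.
Context {T : Type} {mul : T -> T -> T} (Hinv : is_inverse_semigroup mul).
Local Infix "**" := mul (at level 40, left associativity).

Let mulA : forall a b c, a ** (b ** c) = a ** b ** c := proj1 Hinv.

Ltac reassoc := repeat rewrite mulA; reflexivity.

Definition star (s : T) : T :=
  proj1_sig (constructive_definite_description _ (proj2 Hinv s)).

Lemma star_spec s : s ** star s ** s = s /\ star s ** s ** star s = star s.
Proof. unfold star. destruct (constructive_definite_description _ _) as [t Ht]. exact Ht. Qed.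

Lemma star_unique s t : s ** t ** s = s -> t ** s ** t = t -> t = star s.
Proof.
  intros H1 H2. destruct (proj2 Hinv s) as [t0 [_ U]].
  rewrite <- (U t (conj H1 H2)). apply U, star_spec.
Qed.

Lemma star_involutive s : star (star s) = s.
Proof. symmetry. apply star_unique; apply star_spec. Qed.

Lemma star_idem e : idem mul e -> star e = e.
Proof. intros He. symmetry. apply star_unique; rewrite He; exact He. Qed.

Lemma idem_mul e f : idem mul e -> idem mul f -> idem mul (e ** f).
Proof.
  unfold idem; intros He Hf.
  pose (x := star (e ** f)).
  destruct (star_spec (e ** f)) as [Hx1 Hx2]; fold x in Hx1, Hx2.
  (* [f x e] is also an inverse of [e f], hence equal to [x]. *)
  assert (Hfxe : f ** x ** e = x).
  { apply star_unique.
    - transitivity (e ** (f ** f) ** x ** (e ** e) ** f); [reassoc|].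
      rewrite Hf, He. transitivity (e ** f ** x ** (e ** f)); [reassoc|exact Hx1].
    - transitivity (f ** (x ** (e ** e) ** (f ** f) ** x) ** e); [reassoc|].
      rewrite He, Hf, <- (mulA x e f), Hx2. reflexivity. }
  assert (Hxx : x ** x = x).
  { rewrite <- Hfxe at 1 2.
    transitivity (f ** (x ** (e ** f) ** x) ** e); [reassoc|].
    rewrite Hx2. exact Hfxe. }
  rewrite <- (star_involutive (e ** f)); fold x.
  rewrite (star_idem x Hxx). exact Hxx.
Qed.

Lemma idem_comm e f : idem mul e -> idem mul f -> e ** f = f ** e.
Proof.
  intros He Hf.
  assert (Hef := idem_mul e f He Hf). assert (Hfe := idem_mul f e Hf He).
  unfold idem in *.
  rewrite <- (star_idem (e ** f) Hef). symmetry. apply star_unique.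
  - transitivity (e ** (f ** f) ** (e ** e) ** f); [reassoc|].
    rewrite Hf, He, <- (mulA (e ** f) e f). exact Hef.
  - transitivity (f ** (e ** e) ** (f ** f) ** e); [reassoc|].
    rewrite He, Hf, <- (mulA (f ** e) f e). exact Hfe.
Qed.

Lemma idem_star_mul s : idem mul (star s ** s).
Proof.
  unfold idem. transitivity (star s ** s ** star s ** s); [reassoc|].
  rewrite (proj2 (star_spec s)). reflexivity.
Qed.

Lemma idem_mul_star s : idem mul (s ** star s).
Proof.
  unfold idem. transitivity (s ** star s ** s ** star s); [reassoc|].
  rewrite (proj1 (star_spec s)). reflexivity.
Qed.

Lemma ileq_refl a : ileq mul a a.
Proof. exists (star a ** a). split; [apply idem_star_mul|]. rewrite mulA. symmetry. apply star_spec. Qed.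

Lemma ileq_trans a b c : ileq mul a b -> ileq mul b c -> ileq mul a c.
Proof.
  intros [e [He ->]] [g [Hg ->]]. exists (g ** e).
  split; [apply idem_mul; assumption | reassoc].
Qed.

Lemma ileq_mul_idem v e : idem mul e -> ileq mul (v ** e) v.
Proof. intros He. exists e. auto. Qed.

(* The witness is [s* e s], idempotent because [e] commutes with [s s*]. *)
Lemma ileq_mulr a b s : ileq mul a b -> ileq mul (a ** s) (b ** s).
Proof.
  intros [e [He ->]]. exists (star s ** e ** s).
  assert (Hcomm := idem_comm e (s ** star s) He (idem_mul_star s)).
  split.
  - unfold idem.
    transitivity (star s ** (e ** (s ** star s)) ** e ** s); [reassoc|].
    rewrite Hcomm.
    transitivity (star s ** s ** star s ** (e ** e) ** s); [reassoc|].
    rewrite (proj2 (star_spec s)), He. reassoc.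
  - transitivity (b ** ((s ** star s) ** e) ** s); [|reassoc].
    rewrite <- Hcomm.
    transitivity (b ** e ** (s ** star s ** s)); [|reassoc].
    rewrite (proj1 (star_spec s)). reflexivity.
Qed.

Lemma mul_idem_of_ileq w u f : idem mul f -> ileq mul w (u ** f) -> w ** f = w.
Proof.
  intros Hf [e [He ->]].
  transitivity (u ** (f ** e) ** f); [reassoc|].
  rewrite (idem_comm f e Hf He).
  transitivity (u ** e ** (f ** f)); [reassoc|].
  rewrite Hf, <- mulA, (idem_comm e f He Hf). reassoc.
Qed.

Lemma directed_eq x : directed mul (fun z => z = x).
Proof.
  split; [exists x; reflexivity|].
  intros a b -> ->. exists x. split; [reflexivity|split; apply ileq_refl].
Qed.

Lemma is_sup_eq x : is_sup mul (fun z => z = x) x.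
Proof.
  split; [split; [exact I|intros d ->; apply ileq_refl]|].
  intros v [_ Hv]. apply Hv. reflexivity.
Qed.

Lemma way_below_ileq w x : way_below mul w x -> ileq mul w x.
Proof.
  intros Hw.
  destruct (Hw _ (directed_eq x) x (is_sup_eq x) (ileq_refl x)) as [d [-> Hd]].
  exact Hd.
Qed.

Lemma continuous_ileq x y : continuous_S mul ->
  (forall w, way_below mul w x -> ileq mul w y) -> ileq mul x y.
Proof. intros Hcont Hy. apply (proj2 (proj2 (Hcont x))). split; [exact I|exact Hy]. Qed.

Lemma sep_scott_continuous_of_continuous :
  continuous_S mul -> sep_scott_continuous mul.
Proof.
  intros Hcont D HD u Hu s. split.
  - split; [exact I|]. intros x [d [Hd ->]]. apply ileq_mulr, Hu, Hd.
  - intros v [_ Hv].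
    pose (f := s ** star s).
    assert (Hf : idem mul f) by apply idem_mul_star.
    assert (Huf : ileq mul (u ** f) (v ** star s)).
    { apply (continuous_ileq _ _ Hcont). intros w Hw.
      destruct (Hw D HD u Hu (ileq_mul_idem u f Hf)) as [d [Hd Hwd]].
      rewrite <- (mul_idem_of_ileq w u f Hf (way_below_ileq _ _ Hw)).
      apply ileq_trans with (d ** f); [apply ileq_mulr, Hwd|].
      unfold f. rewrite mulA. apply ileq_mulr, Hv. exists d. auto. }
    replace (u ** s) with (u ** f ** s)
      by (unfold f; rewrite <- mulA, (proj1 (star_spec s)); reflexivity).
    apply ileq_trans with (v ** star s ** s); [apply ileq_mulr, Huf|].
    rewrite <- mulA. apply ileq_mul_idem, idem_star_mul.
Qed.

End InverseSemigroup.

Theorem lemma5p1 (T : Type) (mul : T -> T -> T) :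
  is_inverse_semigroup mul -> mirror mul -> continuous_S mul ->
  sep_scott_continuous mul.
Proof.
  intros Hinv _ Hcont.
  exact (sep_scott_continuous_of_continuous Hinv Hcont).
Qed.
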